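(* Let $\alpha,\beta\in\mathbb{N}\cup\{0\}$ and $1_F\in\mathbb{N}$, and let $n_F=[x^n]\,\frac{1_F\,x}{(1-\alpha x)(1-\beta x)}$ for $n\ge0$. Let $(b_1,\dots,b_k)$ be a composition of $n\in\mathbb{N}$ into $k$ positive parts. Then $$n_F=\Big(\sum_{s=1}^k b_s\Big)_F=\sum_{s=1}^k \alpha^{\,b_{s+1}+\cdots+b_k}\,\beta^{\,b_1+\cdots+b_{s-1}}\,(b_s)_F .$$
   Context: $[x^n]$ denotes the coefficient of $x^n$ in the power series expansion. Empty sums in exponents equal $0$, and $0^0=1$. *)

From mathcomp Require Import all_boot all_algebra.
Set Implicit Arguments. Unset Strict Implicit. Unset Printing Implicit Defensive.
Import GRing.Theory.
Local Open Scope ring_scope.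

(* Truncated geometric series  sum_{i=0}^{m} (a x)^i  in Z[x]; its coefficients
   agree with those of 1/(1 - a x) up to degree m. *)
Definition geom_trunc (a m : nat) : {poly int} :=
  \sum_(i < m.+1) ((a%:R : int) ^+ i)%:P * 'X^i.

(* n_F = [x^n]  1_F x / ((1 - alpha x)(1 - beta x)).
   The coefficient of x^n only depends on the series modulo x^(n+1), so the
   geometric series may be truncated at degree n. *)
Definition nF (alpha beta oneF n : nat) : int :=
  ((oneF%:R : int)%:P * 'X * geom_trunc alpha n * geom_trunc beta n)`_n.

(* Cauchy multiplication of the two geometric series gives
   n_F = 1_F [n], where [n] = \sum_(j < n) alpha^j beta^(n-1-j) is the
   (alpha, beta)-analogue of the integer n.  Splitting the sum at j = k gives
   [k + m] = alpha^k [m] + beta^m [k]; iterating this over the parts of the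
   composition yields the formula. *)
From mathcomp Require Import all_boot all_algebra.
From mathcomp Require Import zify.
Import GRing.Theory.
Local Open Scope ring_scope.

Definition pq_int {R : comNzRingType} (a b : R) (n : nat) : R :=
  \sum_(0 <= j < n) a ^+ j * b ^+ (n.-1 - j).

Section PQInt.

Variables (R : comNzRingType) (a b : R).

Lemma pq_intD k m : pq_int a b (k + m) = a ^+ k * pq_int a b m + b ^+ m * pq_int a b k.
Proof.
rewrite /pq_int (big_cat_nat (leq0n k) (leq_addr m k)) /= addrC; congr (_ + _).
  rewrite -{1}(add0n k) big_addn addKn mulr_sumr; apply: eq_big_nat => j /andP[_ Hj].
  rewrite mulrA -exprD (addnC k j); congr (_ ^+ _ * _ ^+ _); lia.
rewrite mulr_sumr; apply: eq_big_nat => j /andP[_ Hj].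
rewrite mulrCA -exprD; congr (_ * (_ ^+ _)); lia.
Qed.

Lemma pq_int_sumn (l : seq nat) :
  pq_int a b (sumn l) =
  \sum_(s < size l)
    a ^+ sumn (drop s.+1 l) * b ^+ sumn (take s l) * pq_int a b (nth 0%N l s).
Proof.
elim: l => [|x l IHl]; first by rewrite big_ord0 /pq_int big_geq.
rewrite /= big_ord_recl /= addnC pq_intD IHl drop0 /= expr0 mulr1.
congr (_ + _); rewrite mulr_sumr; apply: eq_bigr => i _ /=.
by rewrite exprD !mulrA [b ^+ x * _]mulrC.
Qed.

End PQInt.

Lemma geom_truncE a m : geom_trunc a m = \poly_(i < m.+1) ((a%:R : int) ^+ i).
Proof. by rewrite poly_def /geom_trunc; apply: eq_bigr => i _; rewrite mul_polyC. Qed.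

Lemma nF_pq_int a b c n : nF a b c n = c%:R * pq_int (a%:R : int) b%:R n.
Proof.
rewrite /nF (mulrC _ 'X) -!mulrA mulrC coefMX.
case: n => [|m] /=; first by rewrite /pq_int big_geq // mulr0.
rewrite coefCM coefM /pq_int big_mkord; congr (_ * _).
apply: eq_bigr => -[j ltjm] _ /=.
rewrite !geom_truncE !coef_poly /= ltnS (ltnW ltjm) ltnS.
by rewrite (leq_trans (leq_subr _ _) (leqnSn m)).
Qed.

Theorem proposition1 (alpha beta oneF n : nat) (b : seq nat) :
  (0 < oneF)%N -> (0 < n)%N ->
  all (fun x => 0 < x)%N b -> sumn b = n ->
  nF alpha beta oneF n = nF alpha beta oneF (sumn b) /\
  nF alpha beta oneF (sumn b) =
    \sum_(s < size b)
      (alpha%:R : int) ^+ (sumn (drop s.+1 b)) *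
      (beta%:R : int) ^+ (sumn (take s b)) *
      nF alpha beta oneF (nth 0%N b s).
Proof.
(* The identity holds for every composition, even with zero parts or 1_F = 0. *)
move=> _ _ _ <-; split => //.
rewrite nF_pq_int pq_int_sumn mulr_sumr; apply: eq_bigr => s _.
by rewrite nF_pq_int mulrCA mulrA.
Qed.
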